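(* Let $X$ be a nonnegative random variable with support $(0,r)$, where $r\in(0,+\infty)$, having finite CIGF $G_X(\alpha,\beta)$ for $(\alpha,\beta)\in D_X$. Assume the moment generating function $M_X(s)=\mathbb{E}(e^{sX})$ satisfies $M_X(s)<+\infty$ for all $s\in(-s_0,s_0)$, for some $s_0>0$. Then: (i) for all $s_1\in(-s_0,0)$, $s_2\in(0,s_0)$ and $(\alpha,\beta)\in D_X$ with $\alpha>0,\beta>0$, $$G_X(\alpha,\beta)\le g(r;\alpha,\beta,\mathbf{s})\,[M_X(s_1)]^\alpha[M_X(s_2)]^\beta;$$ (ii) for all $s_1\in(-s_0,0)$, $s_2\in(0,s_0)$ and $(\alpha,\beta)\in D_X$ with $\alpha<0,\beta<0$, $$G_X(\alpha,\beta)\ge g(r;\alpha,\beta,\mathbf{s})\,[M_X(s_1)]^\alpha[M_X(s_2)]^\beta,$$ where $g(r;\alpha,\beta,\mathbf{s})=\frac{1}{\alpha s_1+\beta s_2}\left[1-e^{-(\alpha s_1+\beta s_2)r}\right]$ if $\alpha s_1+\beta s_2\ne0$, and $g(r;\alpha,\beta,\mathbf{s})=r$ if $\alpha s_1+\beta s_2=0$.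
   Context: For a random variable $X$ with CDF $F$ and survival function $\overline F=1-F$, let $l=\inf\{x:F(x)>0\}$, $r=\sup\{x:\overline F(x)>0\}$. The CIGF of $X$ is $G_X(\alpha,\beta)=\int_l^r [F(x)]^\alpha[\overline F(x)]^\beta\,dx$ on $D_X=\{(\alpha,\beta)\in\mathbb{R}^2: G_X(\alpha,\beta)<\infty\}$. *)

From HB Require Import structures.
From mathcomp Require Import all_boot all_order all_algebra.
From mathcomp Require Import all_classical all_reals all_analysis.
Set Implicit Arguments. Unset Strict Implicit. Unset Printing Implicit Defensive.
Import Order.TTheory GRing.Theory Num.Theory.
Local Open Scope classical_set_scope.
Local Open Scope ring_scope.

(* Real-valued CDF  F(x) = P(X <= x)  and survival function  Fbar(x) = P(X > x),
   built from the library's cdf / ccdf (which are \bar R-valued, finite). *)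
Definition cdfR d (T : measurableType d) (R : realType) (P : probability T R)
  (X : {RV P >-> R}) (x : R) : R := fine (cdf X x).
Definition sfR d (T : measurableType d) (R : realType) (P : probability T R)
  (X : {RV P >-> R}) (x : R) : R := fine (ccdf X x).

Definition supp_l d (T : measurableType d) (R : realType) (P : probability T R)
  (X : {RV P >-> R}) : \bar R :=
  ereal_inf [set x%:E | x in [set x : R | 0 < cdfR X x]].
Definition supp_r d (T : measurableType d) (R : realType) (P : probability T R)
  (X : {RV P >-> R}) : \bar R :=
  ereal_sup [set x%:E | x in [set x : R | 0 < sfR X x]].

Definition CIGF d (T : measurableType d) (R : realType) (P : probability T R)
  (X : {RV P >-> R}) (a b : R) : \bar R :=
  (\int[lebesgue_measure]_(x in [set x : R | (supp_l X < x%:E)%E /\ (x%:E < supp_r X)%E])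
     ((cdfR X x) `^ a * (sfR X x) `^ b)%:E)%E.

Definition CIGF_dom d (T : measurableType d) (R : realType) (P : probability T R)
  (X : {RV P >-> R}) : set (R * R) :=
  [set ab | (CIGF X ab.1 ab.2 < +oo)%E].

Definition gfun (R : realType) (r a b s1 s2 : R) : R :=
  let c := a * s1 + b * s2 in
  if c != 0 then c^-1 * (1 - expR (- (c * r))) else r.

From HB Require Import structures.
From mathcomp Require Import all_boot all_order all_algebra.
From mathcomp Require Import all_classical all_reals all_analysis.
From mathcomp Require Import measurable_realfun.
From mathcomp Require Import ring lra.
Import Order.TTheory GRing.Theory Num.Theory numFieldNormedType.Exports.
Local Open Scope classical_set_scope.
Local Open Scope ring_scope.

(* Chernoff's inequality bounds both tails, F(x) <= M(s1) e^(-s1 x) for s1 < 0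
   and Fbar(x) <= M(s2) e^(-s2 x) for s2 > 0.  On (0, r) both F and Fbar are
   positive, so raising these bounds to powers a, b of a common sign and
   multiplying gives F^a Fbar^b <= M(s1)^a M(s2)^b e^(-(a s1 + b s2) x) when
   a, b > 0, and the reverse inequality when a, b < 0.  Integrating
   e^(-c x) over (0, r) yields g(r; a, b, s). *)

Section chernoff_tails.
Context d (T : measurableType d) (R : realType) (P : probability T R).
Variable X : {RV P >-> R}.

Lemma cdf_le_mmt_gen_fun x s : s < 0 ->
  (cdf X x <= 'M_P X s * (expR (- (s * x)))%:E)%E.
Proof.
move=> s_lt0.
have := @chernoff _ _ _ P (- X)%R _ (- x) (_ : 0 < - s); rewrite oppr_gt0 => /(_ s_lt0).
have -> : 'M_P (- X)%R (- s) = 'M_P X s.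
  by congr expectation; apply/funext => t /=; rewrite mulrNN.
rewrite mulrNN; apply: le_trans; rewrite le_eqVlt; apply/orP; left.
by apply/eqP; congr (P _); apply/seteqP; split => t /=; rewrite in_itv/= lerN2.
Qed.

Lemma ccdf_le_mmt_gen_fun x s : 0 < s ->
  (ccdf X x <= 'M_P X s * (expR (- (s * x)))%:E)%E.
Proof.
move=> s_gt0; apply: le_trans (chernoff X x s_gt0).
have mX (A : set R) : measurable A -> measurable (X @^-1` A).
  by move=> mA; rewrite -[X in measurable X]setTI; exact: measurable_funP.
rewrite /ccdf /distribution /= /pushforward.
apply: le_measure; rewrite ?inE; first exact: mX.
- rewrite [X in measurable X](_ : _ = X @^-1` `[x, +oo[); first exact: mX.
  by apply/seteqP; split => t /=; rewrite in_itv/= andbT.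
- by move=> t /=; rewrite in_itv/= andbT => /ltW.
Qed.

Lemma cdfR_le_mmt_gen_fun x s : s < 0 -> 'M_P X s \is a fin_num ->
  cdfR X x <= fine ('M_P X s) * expR (- (s * x)).
Proof.
move=> s_lt0 Mfin; rewrite -lee_fin EFinM !fineK ?fin_num_measure //.
exact: cdf_le_mmt_gen_fun.
Qed.

Lemma sfR_le_mmt_gen_fun x s : 0 < s -> 'M_P X s \is a fin_num ->
  sfR X x <= fine ('M_P X s) * expR (- (s * x)).
Proof.
move=> s_gt0 Mfin; rewrite -lee_fin EFinM !fineK ?fin_num_measure //.
exact: ccdf_le_mmt_gen_fun.
Qed.

Lemma cdfR_gt0 x : (supp_l X < x%:E)%E -> 0 < cdfR X x.
Proof.
move=> /ereal_inf_lt[_ [y /= cdfy_gt0 <-]]; rewrite lte_fin => yx.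
apply: (lt_le_trans cdfy_gt0); apply: fine_le; rewrite ?fin_num_measure //.
exact: cdf_nondecreasing (ltW yx).
Qed.

Lemma sfR_gt0 x : (x%:E < supp_r X)%E -> 0 < sfR X x.
Proof.
move=> /ereal_sup_gt[_ [y /= sfy_gt0 <-]]; rewrite lte_fin => xy.
apply: (lt_le_trans sfy_gt0); apply: fine_le; rewrite ?fin_num_measure //.
exact: ccdf_nonincreasing (ltW xy).
Qed.

Lemma measurable_CIGF_integrand a b :
  measurable_fun setT (fun x => ((cdfR X x) `^ a * (sfR X x) `^ b)%:E).
Proof.
have mF : measurable_fun setT (cdfR X).
  apply: nondecreasing_measurable => // u v uv.
  by apply: fine_le; rewrite ?fin_num_measure //; exact: cdf_nondecreasing.
have mFbar : measurable_fun setT (sfR X).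
  apply: nonincreasing_measurable => // u v uv.
  by apply: fine_le; rewrite ?fin_num_measure //; exact: ccdf_nonincreasing.
apply/measurable_EFinP; apply: measurable_funM.
- exact: measurableT_comp (measurable_powR a) mF.
- exact: measurableT_comp (measurable_powR b) mFbar.
Qed.

End chernoff_tails.

Section powR_bounds.
Variable R : realType.
Implicit Types F G A B u v a b : R.

Lemma ln_le_of_le_mul_expR F A u : 0 < F -> F <= A * expR u ->
  0 < A /\ ln F <= ln A + u.
Proof.
move=> F_gt0 FA.
have A_gt0 : 0 < A by rewrite -(pmulr_lgt0 _ (expR_gt0 u)) (lt_le_trans F_gt0).
split => //; move: FA; rewrite -ler_ln ?posrE ?mulr_gt0 ?expR_gt0 //.
by rewrite lnM ?posrE ?expR_gt0 // expRK.
Qed.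

Lemma powRM_le_mul_expR F G A B u v a b : 0 < F -> 0 < G ->
  F <= A * expR u -> G <= B * expR v -> 0 <= a -> 0 <= b ->
  F `^ a * G `^ b <= A `^ a * B `^ b * expR (a * u + b * v).
Proof.
move=> F_gt0 G_gt0 /(ln_le_of_le_mul_expR _ _ _ F_gt0)[A_gt0 lnF].
move=> /(ln_le_of_le_mul_expR _ _ _ G_gt0)[B_gt0 lnG] a_ge0 b_ge0.
by rewrite /powR !gt_eqF // -!expRD ler_expR; nra.
Qed.

Lemma mul_expR_le_powRM F G A B u v a b : 0 < F -> 0 < G ->
  F <= A * expR u -> G <= B * expR v -> a <= 0 -> b <= 0 ->
  A `^ a * B `^ b * expR (a * u + b * v) <= F `^ a * G `^ b.
Proof.
move=> F_gt0 G_gt0 /(ln_le_of_le_mul_expR _ _ _ F_gt0)[A_gt0 lnF].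
move=> /(ln_le_of_le_mul_expR _ _ _ G_gt0)[B_gt0 lnG] a_le0 b_le0.
by rewrite /powR !gt_eqF // -!expRD ler_expR; nra.
Qed.

End powR_bounds.

Section integral_expR.
Variable R : realType.
Notation mu := (@lebesgue_measure R).

Lemma continuous_expR_scale (c : R) : continuous (fun x : R^o => expR (- (c * x))).
Proof.
move=> x; apply: continuous_comp; last exact: continuous_expR.
by apply: (@continuousN _ R^o); apply: continuousM => //; exact: cst_continuous.
Qed.

Lemma integral_expR_itvcc (c r : R) : 0 < r -> c != 0 ->
  (\int[mu]_(x in `[0%R, r]) (expR (- (c * x)))%:E =
   (c^-1 * (1 - expR (- (c * r))))%:E)%E.
Proof.
move=> r_gt0 c_neq0.
have -> : c^-1 * (1 - expR (- (c * r))) =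
    - c^-1 * expR (- (c * r)) - - c^-1 * expR (- (c * 0)).
  by rewrite mulr0 oppr0 expR0; ring.
set F := fun x : R^o => - c^-1 * expR (- (c * x)).
have F_cont : continuous F.
  by move=> x; apply: cvgM; [exact: cvg_cst|exact: continuous_expR_scale].
apply: (@continuous_FTC2 _ _ F) => //.
- exact: continuous_subspaceT (continuous_expR_scale c).
- split.
  + by move=> x _; exact: ex_derive.
  + by apply/cvg_at_right_filter; exact: F_cont.
  + by apply/cvg_at_left_filter; exact: F_cont.
- move=> x _; rewrite derive1Ml // derive1_comp // derive1E.
  have /funeqP -> := @derive_expR R.
  by rewrite derive1N // derive1Ml // derive1_id; field.
Qed.

Lemma integral_expR_itvoo (c r : R) : 0 < r ->
  (\int[mu]_(x in `]0%R, r[) (expR (- (c * x)))%:E =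
   (if c != 0 then c^-1 * (1 - expR (- (c * r))) else r)%:E)%E.
Proof.
move=> r_gt0.
have mexp : measurable_fun setT (EFin \o (fun x : R => expR (- (c * x)))).
  apply/measurable_EFinP; apply: continuous_measurable_fun.
  exact: continuous_expR_scale.
rewrite integral_itv_obnd_cbnd; last exact: measurable_funTS.
rewrite integral_itv_bndo_bndc; last exact: measurable_funTS.
case: ifPn => [c_neq0|/negPn/eqP ->]; first exact: integral_expR_itvcc.
under eq_integral do rewrite mul0r oppr0 expR0.
by rewrite integral_cst //= lebesgue_measure_itv /= lte_fin r_gt0 mul1e -EFinD subr0.
Qed.

Lemma integral_mul_expR_gfun (r a b s1 s2 K : R) : 0 < r -> 0 <= K ->
  (\int[mu]_(x in `]0%R, r[) (K * expR (- ((a * s1 + b * s2) * x)))%:E =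
   (gfun r a b s1 s2 * K)%:E)%E.
Proof.
move=> r_gt0 K_ge0; under eq_integral do rewrite EFinM.
rewrite ge0_integralZl_EFin //; first by rewrite integral_expR_itvoo // -EFinM mulrC.
apply/measurable_EFinP; apply: measurable_funTS.
by apply: continuous_measurable_fun; exact: continuous_expR_scale.
Qed.

End integral_expR.

Section CIGF_bounds.
Context d (T : measurableType d) (R : realType) (P : probability T R).
Variables (X : {RV P >-> R}) (r s1 s2 : R).
Hypotheses (r_gt0 : 0 < r) (supp_l0 : supp_l X = 0%E) (supp_rr : supp_r X = r%:E).
Hypotheses (s1_lt0 : s1 < 0) (s2_gt0 : 0 < s2).
Hypotheses (M1fin : 'M_P X s1 \is a fin_num) (M2fin : 'M_P X s2 \is a fin_num).

Lemma CIGF_itvoo a b : CIGF X a b =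
  (\int[lebesgue_measure]_(x in `]0%R, r[) ((cdfR X x) `^ a * (sfR X x) `^ b)%:E)%E.
Proof.
rewrite /CIGF supp_l0 supp_rr; congr integral.
apply/seteqP; split => x /=; rewrite in_itv /= !lte_fin; first by case=> -> ->.
by move=> /andP[-> ->].
Qed.

Lemma tail_bounds_itvoo x : 0 < x < r ->
  [/\ 0 < cdfR X x, 0 < sfR X x,
      cdfR X x <= fine ('M_P X s1) * expR (- (s1 * x))
    & sfR X x <= fine ('M_P X s2) * expR (- (s2 * x))].
Proof.
move=> /andP[x_gt0 x_ltr]; split.
- by apply: cdfR_gt0; rewrite supp_l0 lte_fin.
- by apply: sfR_gt0; rewrite supp_rr lte_fin.
- exact: cdfR_le_mmt_gen_fun.
- exact: sfR_le_mmt_gen_fun.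
Qed.

Let M12 a b := fine ('M_P X s1) `^ a * fine ('M_P X s2) `^ b.

Let integral_M12_expR a b :
  (\int[lebesgue_measure]_(x in `]0%R, r[)
     (M12 a b * expR (- ((a * s1 + b * s2) * x)))%:E =
   (gfun r a b s1 s2 * fine ('M_P X s1) `^ a * fine ('M_P X s2) `^ b)%:E)%E.
Proof. by rewrite integral_mul_expR_gfun ?mulr_ge0 ?powR_ge0 // mulrA. Qed.

Let measurable_M12_expR a b : measurable_fun `]0%R, r[
  (fun x => (M12 a b * expR (- ((a * s1 + b * s2) * x)))%:E).
Proof.
apply/measurable_EFinP; apply: measurable_funM => //; apply: measurable_funTS.
by apply: continuous_measurable_fun; exact: continuous_expR_scale.
Qed.

Lemma CIGF_le_gfun a b : 0 <= a -> 0 <= b ->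
  (CIGF X a b <= (gfun r a b s1 s2 * fine ('M_P X s1) `^ a
                                  * fine ('M_P X s2) `^ b)%:E)%E.
Proof.
move=> a_ge0 b_ge0; rewrite CIGF_itvoo -integral_M12_expR.
apply: ge0_le_integral => //.
- by move=> x _; rewrite lee_fin mulr_ge0 ?powR_ge0.
- by apply: measurable_funTS; exact: measurable_CIGF_integrand.
- exact: measurable_M12_expR.
- move=> x; rewrite /= => /[!in_itv] /= /tail_bounds_itvoo[F_gt0 Fbar_gt0 F_le Fbar_le].
  have -> : - ((a * s1 + b * s2) * x) = a * - (s1 * x) + b * - (s2 * x) by ring.
  by rewrite lee_fin; exact: powRM_le_mul_expR.
Qed.

Lemma gfun_le_CIGF a b : a <= 0 -> b <= 0 ->
  ((gfun r a b s1 s2 * fine ('M_P X s1) `^ a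
                     * fine ('M_P X s2) `^ b)%:E <= CIGF X a b)%E.
Proof.
move=> a_le0 b_le0; rewrite CIGF_itvoo -integral_M12_expR.
apply: ge0_le_integral => //.
- by move=> x _; rewrite lee_fin !mulr_ge0 ?powR_ge0 ?expR_ge0.
- exact: measurable_M12_expR.
- by apply: measurable_funTS; exact: measurable_CIGF_integrand.
- move=> x; rewrite /= => /[!in_itv] /= /tail_bounds_itvoo[F_gt0 Fbar_gt0 F_le Fbar_le].
  have -> : - ((a * s1 + b * s2) * x) = a * - (s1 * x) + b * - (s2 * x) by ring.
  by rewrite lee_fin; exact: mul_expR_le_powRM.
Qed.

End CIGF_bounds.

Theorem proposition4 (d : measure_display) (T : measurableType d) (R : realType)
  (P : probability T R) (X : {RV P >-> R}) (r s0 : R) :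
  0 < r ->
  supp_l X = 0%E -> supp_r X = r%:E ->
  0 < s0 ->
  (forall s, - s0 < s < s0 -> ('M_P X s < +oo)%E) ->
  (forall s1 s2 a b, - s0 < s1 < 0 -> 0 < s2 < s0 ->
     (a, b) \in CIGF_dom X -> 0 < a -> 0 < b ->
     (CIGF X a b <= (gfun r a b s1 s2 * (fine ('M_P X s1)) `^ a
                                     * (fine ('M_P X s2)) `^ b)%:E)%E) /\
  (forall s1 s2 a b, - s0 < s1 < 0 -> 0 < s2 < s0 ->
     (a, b) \in CIGF_dom X -> a < 0 -> b < 0 ->
     ((gfun r a b s1 s2 * (fine ('M_P X s1)) `^ a
                        * (fine ('M_P X s2)) `^ b)%:E <= CIGF X a b)%E).
Proof.
move=> r_gt0 supp_l0 supp_rr s0_gt0 M_lty.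
have M_fin s : - s0 < s < s0 -> 'M_P X s \is a fin_num.
  move=> s_in; rewrite ge0_fin_numE ?M_lty //.
  by apply: expectation_ge0 => t; exact: expR_ge0.
split=> s1 s2 a b /andP[s1_gt s1_lt0] /andP[s2_gt0 s2_lt] _ a_sgn b_sgn.
- apply: CIGF_le_gfun; rewrite ?ltW //; apply: M_fin.
  + by rewrite s1_gt (lt_trans s1_lt0).
  + by rewrite s2_lt (lt_trans _ s2_gt0) // oppr_lt0.
- apply: gfun_le_CIGF; rewrite ?ltW //; apply: M_fin.
  + by rewrite s1_gt (lt_trans s1_lt0).
  + by rewrite s2_lt (lt_trans _ s2_gt0) // oppr_lt0.
Qed.
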